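(* Let $\mathcal A$ be an $N\times N$ Hermitian matrix and, for $k=0,1,\dots,N-1$, let $\mathcal A^k$ be the matrix whose entries equal those of $\mathcal A$ on the $k$-th supra- and infra-diagonals (entries $(i,i+k)$ and $(i+k,i)$) and are zero elsewhere. Let $\psi\in\mathbb{C}^N$ be a normalized vector (not necessarily an eigenvector), and set $d_k=(\psi,\mathcal A^k\psi)$ and $\lambda=(\psi,\mathcal A\psi)=\sum_{k=0}^{N-1}d_k$. Let $M\le N$ be a positive integer. Then there exist an integer $n\in[0,N-M]$ and a normalized vector $\phi\in\mathbb{C}^N$ with $\phi_j=0$ unless $n+1\le j\le n+M$, such that $$(\phi,\mathcal A\phi)\le\lambda+\frac{C}{M^2}\sum_{k=1}^{M-1}k^2|d_k|+C\sum_{k=M}^{N-1}|d_k|,$$ where $C>0$ is a universal constant. *)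

(* Complex numbers are modelled as R[i] = complex R for R : realType
   (mathcomp-real-closed), vectors of C^N as column vectors 'cV[R[i]]_N. *)
From HB Require Import structures.
From mathcomp Require Import all_boot all_order all_algebra.
From mathcomp Require Import complex.
From mathcomp Require Import reals.
Set Implicit Arguments. Unset Strict Implicit. Unset Printing Implicit Defensive.
Import Order.TTheory GRing.Theory Num.Theory.
Local Open Scope ring_scope.

Definition cdot (C : numClosedFieldType) (N : nat) (u v : 'cV[C]_N) : C :=
  \sum_(i < N) (u i 0)^* * v i 0.

Definition is_hermitian (C : numClosedFieldType) (N : nat) (A : 'M[C]_N) : Prop :=
  forall i j : 'I_N, A j i = (A i j)^*.

Definition band (C : numClosedFieldType) (N : nat) (A : 'M[C]_N) (k : nat) : 'M[C]_N :=
  \matrix_(i < N, j < N) (if (j == i + k :> nat)%N || (i == j + k :> nat)%N then A i j else 0).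

(* phi is supported on the (0-based) indices n, ..., n+M-1,
   i.e. the 1-based indices n+1, ..., n+M. *)
Definition supported_in (C : numClosedFieldType) (N : nat) (phi : 'cV[C]_N) (n M : nat) : Prop :=
  forall j : 'I_N, ~~ ((n <= j) && (j < n + M))%N -> phi j 0 = 0.

From HB Require Import structures.
From mathcomp Require Import all_boot all_order all_algebra.
From mathcomp Require Import complex.
From mathcomp Require Import reals.
From mathcomp Require Import zify ring lra.
Set Implicit Arguments. Unset Strict Implicit. Unset Printing Implicit Defensive.
Import Order.TTheory GRing.Theory Num.Theory.

(* Localize psi by a tent-shaped window of width M and average over all
   translates: with w_s(i) = tent(s - i), phi_s = w_s psi, and F the
   autocorrelation of the tent, one has
     sum_s (phi_s, A phi_s) = sum_k F(k) d_k   and   sum_s |phi_s|^2 = F(0),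
   so some phi_s has Rayleigh quotient at most sum_k (F(k)/F(0)) d_k.  Since
   F(k) = 0 for k >= M, 0 <= F(0) - F(k) <= M k^2 (the tent is 1-Lipschitz)
   and F(0) >= M^3/36 (Cauchy-Schwarz, as sum_t tent(t) >= M^2/6), this is
   at most lambda + 36/M^2 sum_(k<M) k^2 |d_k| + 36 sum_(k>=M) |d_k|. *)

Section Tent.
Local Open Scope nat_scope.
Variable M : nat.

Definition tent (t : nat) : nat := if t < M then minn t.+1 (M - t) else 0.

Definition window (s i : nat) : nat := if i <= s then tent (s - i) else 0.

Definition autocorr (k : nat) : nat := \sum_(0 <= t < M) tent t * tent (t + k).

Lemma tent_eq0 t : M <= t -> tent t = 0.
Proof. by rewrite /tent; case: ltnP. Qed.

Lemma tentD_le t k : tent (t + k) <= tent t + k.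
Proof. by rewrite /tent; case: ifP; case: ifP; lia. Qed.

Lemma tent_leD t k : tent t <= tent (t + k) + k.
Proof. by rewrite /tent; case: ifP; case: ifP; lia. Qed.

Lemma tent_le t : tent t <= t.+1.
Proof. by rewrite /tent; case: ifP; lia. Qed.

Lemma tent_ge t : t < M -> t.+1 * (M - t) <= M * tent t.
Proof. by rewrite /tent => ->; rewrite /minn; case: ifP; nia. Qed.

Lemma window_neq0 s i : window s i != 0 -> i <= s < i + M.
Proof. by rewrite /window /tent; do 2?case: ifP; lia. Qed.

Lemma autocorr_eq0 k : M <= k -> autocorr k = 0.
Proof.
move=> le_Mk; rewrite /autocorr big1_seq // => t _.
by rewrite (@tent_eq0 (t + k)) ?muln0 //; lia.
Qed.

Lemma sum_window_mul S i j : i <= j -> j + M <= S ->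
  \sum_(0 <= s < S) window s i * window s j = autocorr (j - i).
Proof.
move=> le_ij le_jMS.
rewrite (big_cat_nat _ (n := j)) //=; last by lia.
rewrite big1_seq ?add0n => [|s]; last first.
  rewrite mem_index_iota /window => /andP[_ /andP[_ lt_sj]].
  by rewrite (leqNgt j) lt_sj muln0.
rewrite -{1}(add0n j) big_addn (big_cat_nat _ (n := M)) //=; last by lia.
rewrite [X in _ + X]big1_seq ?addn0 => [|t]; last first.
  rewrite mem_index_iota /window => /andP[_ /andP[le_Mt _]].
  by rewrite leq_addl addnK (tent_eq0 le_Mt) muln0.
apply: eq_big_nat => t _.
rewrite /window leq_addl addnK (leq_trans le_ij (leq_addl _ _)) mulnC.
by have -> : t + j - i = t + (j - i) by lia.
Qed.

Lemma sum_window_mul_dist S i j : i + M <= S -> j + M <= S ->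
  \sum_(0 <= s < S) window s i * window s j = autocorr `|i - j|.
Proof.
move=> le_iMS le_jMS; case: (leqP i j) => [le_ij|/ltnW le_ji].
  by rewrite distnEr // sum_window_mul.
rewrite distnEl // -(sum_window_mul le_ji le_iMS).
by apply: eq_bigr => s _; rewrite mulnC.
Qed.

End Tent.

Local Open Scope ring_scope.

Section AutocorrBounds.
Variables (R : realFieldType) (M : nat).
Local Notation x t := ((tent M t)%:R : R).
Local Notation F k := ((autocorr M k)%:R : R).

Lemma autocorrE k : F k = \sum_(0 <= t < M) x t * x (t + k).
Proof. by rewrite natr_sum; apply: eq_bigr => t _; rewrite natrM. Qed.

Lemma autocorr0E : F 0 = \sum_(0 <= t < M) x t ^+ 2.
Proof. by rewrite autocorrE; apply: eq_bigr => t _; rewrite addn0 expr2. Qed.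

Lemma sum_tent_sq_shift k : (k <= M)%N ->
  \sum_(0 <= t < M) x (t + k) ^+ 2 + \sum_(0 <= t < k) x t ^+ 2 =
  \sum_(0 <= t < M) x t ^+ 2.
Proof.
move=> le_kM.
have -> : \sum_(0 <= t < M) x (t + k) ^+ 2 = \sum_(k <= u < M + k) x u ^+ 2.
  by rewrite -{2}(add0n k) big_addn addnK.
rewrite (big_cat_nat _ (n := M)) //=; last by lia.
rewrite [X in _ + X + _]big1_seq ?addr0 => [|t]; last first.
  by rewrite mem_index_iota => /andP[_ /andP[le_Mt _]]; rewrite (tent_eq0 le_Mt) expr0n.
by rewrite addrC -big_cat_nat.
Qed.

Lemma autocorr_decrement k : (k <= M)%N ->
  2 * (F 0 - F k) =
  \sum_(0 <= t < M) (x (t + k) - x t) ^+ 2 + \sum_(0 <= t < k) x t ^+ 2.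
Proof.
move=> le_kM; have := sum_tent_sq_shift le_kM.
have -> : \sum_(0 <= t < M) (x (t + k) - x t) ^+ 2 =
    \sum_(0 <= t < M) x (t + k) ^+ 2 + \sum_(0 <= t < M) x t ^+ 2 - 2 * F k.
  rewrite autocorrE mulr_sumr -big_split -sumrB /=.
  by apply: eq_bigr => t _; ring.
rewrite autocorr0E; lra.
Qed.

Lemma autocorr_sub_bounds k : (k <= M)%N -> 0 <= F 0 - F k <= M%:R * k%:R ^+ 2.
Proof.
move=> le_kM; have := autocorr_decrement le_kM.
have lipschitz : \sum_(0 <= t < M) (x (t + k) - x t) ^+ 2 <= M%:R * k%:R ^+ 2.
  have -> : M%:R * k%:R ^+ 2 = \sum_(0 <= t < M) (k%:R ^+ 2 : R).
    by rewrite sumr_const_nat subn0 mulr_natl.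
  apply: ler_sum_nat => t _.
  have : x (t + k) <= x t + k%:R by rewrite -natrD ler_nat tentD_le.
  have : x t <= x (t + k) + k%:R by rewrite -natrD ler_nat tent_leD.
  nra.
have head : \sum_(0 <= t < k) x t ^+ 2 <= M%:R * k%:R ^+ 2.
  apply: (@le_trans _ _ (\sum_(0 <= t < k) k%:R ^+ 2)).
    apply: ler_sum_nat => t /andP[_ lt_tk]; rewrite lerXn2r ?nnegrE ?ler0n //.
    by rewrite ler_nat (leq_trans (tent_le M t)).
  by rewrite sumr_const_nat subn0 -[_ *+ k]mulr_natl ler_wpM2r ?exprn_ge0 ?ler0n ?ler_nat.
have : 0 <= \sum_(0 <= t < M) (x (t + k) - x t) ^+ 2 by apply: sumr_ge0 => t _; apply: sqr_ge0.
have : 0 <= \sum_(0 <= t < k) x t ^+ 2 by apply: sumr_ge0 => t _; apply: sqr_ge0.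
lra.
Qed.

Lemma sum_tent_ge : (0 < M)%N -> M%:R ^+ 2 <= 6 * \sum_(0 <= t < M) x t.
Proof.
move=> M_gt0; set m : R := M%:R.
have closed_form n : 6 * \sum_(0 <= t < n) (t%:R + 1) * (m - t%:R) =
    3 * m * n%:R * (n%:R + 1) - 2 * (n%:R - 1) * n%:R * (n%:R + 1).
  elim: n => [|n IH]; first by rewrite big_geq //; ring.
  by rewrite big_nat_recr //= mulrDr IH -[n.+1]addn1 natrD; ring.
have lower : \sum_(0 <= t < M) (t%:R + 1) * (m - t%:R) <= m * \sum_(0 <= t < M) x t.
  rewrite mulr_sumr; apply: ler_sum_nat => t /andP[_ lt_tM].
  by have := tent_ge lt_tM; rewrite -(ler_nat R) !natrM natrB ?natr1 // ltnW.
have m_ge1 : 1 <= m by rewrite ler1n.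
have := closed_form M; rewrite -/m.
nra.
Qed.

Lemma autocorr0_ge : (0 < M)%N -> M%:R ^+ 3 <= 36 * F 0.
Proof.
move=> M_gt0; set m : R := M%:R.
have := sum_tent_ge M_gt0; rewrite -/m => le_m2_sum.
have tangent_line : \sum_(0 <= t < M) (2 * (m / 6) * x t - (m / 6) ^+ 2) <=
                      \sum_(0 <= t < M) x t ^+ 2.
  apply: ler_sum_nat => t _; rewrite -subr_ge0.
  have -> : x t ^+ 2 - (2 * (m / 6) * x t - (m / 6) ^+ 2) = (x t - m / 6) ^+ 2 by ring.
  exact: sqr_ge0.
rewrite sumrB -mulr_sumr sumr_const_nat subn0 -mulr_natl -/m in tangent_line.
have m_ge0 : 0 <= m by rewrite ler0n.
rewrite autocorr0E; nra.
Qed.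

Lemma autocorr0_gt0 : (0 < M)%N -> 0 < F 0.
Proof.
move=> M_gt0; have := autocorr0_ge M_gt0.
have : 0 < (M%:R : R) ^+ 3 by rewrite exprn_gt0 ?ltr0n.
lra.
Qed.

Lemma autocorr_defect k : (0 < M)%N -> (k <= M)%N ->
  0 <= 1 - F k / F 0 <= 36 / M%:R ^+ 2 * k%:R ^+ 2.
Proof.
move=> M_gt0 le_kM; have F0_gt0 := autocorr0_gt0 M_gt0.
have M_neq0 : (M%:R : R) != 0 by rewrite pnatr_eq0 -lt0n.
have -> : 1 - F k / F 0 = (F 0 - F k) / F 0 by field; apply: lt0r_neq0.
have /andP[sub_ge0 sub_le] := autocorr_sub_bounds le_kM.
rewrite divr_ge0 ?(ltW F0_gt0) //= ler_pdivrMr //; apply: le_trans sub_le _.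
have -> : 36 / M%:R ^+ 2 * k%:R ^+ 2 * F 0 = k%:R ^+ 2 / M%:R ^+ 2 * (36 * F 0) by ring.
have -> : M%:R * k%:R ^+ 2 = k%:R ^+ 2 / M%:R ^+ 2 * M%:R ^+ 3 :> R by field.
by rewrite ler_wpM2l ?autocorr0_ge // divr_ge0 ?sqr_ge0.
Qed.

Lemma autocorr_weighted_le N (r : nat -> R) : (0 < M)%N -> (M <= N)%N ->
  (\sum_(k < N) F k * r k) / F 0 <=
  \sum_(k < N) r k + 36 / M%:R ^+ 2 * \sum_(1 <= k < M) k%:R ^+ 2 * `|r k|
  + 36 * \sum_(M <= k < N) `|r k|.
Proof.
move=> M_gt0 le_MN; have F0_gt0 := autocorr0_gt0 M_gt0.
pose defect k := (1 - F k / F 0) * r k.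
have -> : (\sum_(k < N) F k * r k) / F 0 = \sum_(k < N) r k - \sum_(0 <= k < N) defect k.
  rewrite big_mkord mulr_suml -sumrB; apply: eq_bigr => k _.
  by rewrite /defect; field; apply: lt0r_neq0.
rewrite -addrA lerD2l big_ltn ?(leq_trans M_gt0) // (big_cat_nat _ le_MN) //=.
have -> : defect 0%N = 0 by rewrite /defect divff ?subrr ?mul0r // lt0r_neq0.
rewrite add0r opprD -!sumrN !mulr_sumr lerD //.
  apply: ler_sum_nat => k /andP[_ lt_kM].
  have /andP[defect_ge0 defect_le] := autocorr_defect M_gt0 (ltnW lt_kM).
  rewrite /defect -mulrN mulrA; apply: le_trans (ler_wpM2r (normr_ge0 _) defect_le).
  by rewrite ler_wpM2l // -normrN ler_norm.
apply: ler_sum_nat => k /andP[le_Mk _].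
rewrite /defect autocorr_eq0 // mul0r subr0 mul1r.
have := ler_norm (- r k); rewrite normrN; have := normr_ge0 (r k).
lra.
Qed.

End AutocorrBounds.

Section QuadraticForms.
Variables (C : numClosedFieldType) (N : nat).
Implicit Types (A B : 'M[C]_N) (u v : 'cV[C]_N).

Lemma cdot_mulmx B u :
  cdot u (B *m u) = \sum_i \sum_j (u i 0)^* * (B i j * u j 0).
Proof. by apply: eq_bigr => i _; rewrite mxE mulr_sumr. Qed.

Lemma cdotZl a u v : cdot (a *: u) v = a^* * cdot u v.
Proof. by rewrite /cdot mulr_sumr; apply: eq_bigr => i _; rewrite mxE rmorphM mulrA. Qed.

Lemma cdotZr a u v : cdot u (a *: v) = a * cdot u v.
Proof. by rewrite /cdot mulr_sumr; apply: eq_bigr => i _; rewrite mxE mulrCA. Qed.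

Lemma cdot_ge0 u : 0 <= cdot u u.
Proof. by apply: sumr_ge0 => i _; rewrite mulrC mul_conjC_ge0. Qed.

Lemma cdot_eq0 u : cdot u u = 0 -> u = 0.
Proof.
move=> u_null; apply/matrixP => i j; rewrite ord1 mxE.
have : (u i 0)^* * u i 0 = 0.
  by apply: (psumr_eq0P _ u_null) => // l _; rewrite mulrC mul_conjC_ge0.
by move/eqP; rewrite mulf_eq0 conjC_eq0 orbb => /eqP.
Qed.

Lemma hermitian_form_real B u : is_hermitian B -> cdot u (B *m u) \is Num.real.
Proof.
move=> hermB; rewrite CrealE; apply/eqP.
rewrite cdot_mulmx rmorph_sum /=.
under eq_bigr => i _ do rewrite rmorph_sum /=.
rewrite exchange_big; apply: eq_bigr => i _; apply: eq_bigr => j _.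
by rewrite !rmorphM /= conjCK hermB conjCK mulrCA [RHS]mulrCA [u j 0 * _]mulrC.
Qed.

Lemma bandE A k i j : band A k i j = if k == `|i - j|%N then A i j else 0.
Proof.
rewrite mxE; congr (if _ then _ else _).
by case: (leqP i j) => [le_ij|/ltnW le_ji]; [rewrite distnEr|rewrite distnEl]; lia.
Qed.

Lemma band_hermitian A k : is_hermitian A -> is_hermitian (band A k).
Proof.
by move=> hermA i j; rewrite !bandE distnC; case: eqP => _; [apply: hermA | rewrite conjC0].
Qed.

Lemma sum_band_weighted A (f : nat -> C) u :
  \sum_(k < N) f k * cdot u (band A k *m u) =
  \sum_(i < N) \sum_(j < N) f `|i - j|%N * ((u i 0)^* * (A i j * u j 0)).
Proof.
under eq_bigr => k _ do rewrite cdot_mulmx mulr_sumr.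
rewrite exchange_big; apply: eq_bigr => i _.
under eq_bigr => k _ do rewrite mulr_sumr.
rewrite exchange_big; apply: eq_bigr => j _.
rewrite (eq_bigr (fun k : 'I_N => if k == `|i - j|%N :> nat
                   then f k * ((u i 0)^* * (A i j * u j 0)) else 0)); last first.
  by move=> k _; rewrite bandE; case: eqP => _; rewrite ?mul0r ?mulr0.
rewrite -big_mkcond (big_ord1_eq _ (fun k => f k * ((u i 0)^* * (A i j * u j 0)))).
suff -> : (`|i - j| < N)%N by [].
have := ltn_ord i; have := ltn_ord j.
case: (leqP i j) => [le_ij|/ltnW le_ji]; [rewrite distnEr|rewrite distnEl]; lia.
Qed.

Lemma sum_band A u : \sum_(k < N) cdot u (band A k *m u) = cdot u (A *m u).
Proof.
transitivity (\sum_(k < N) 1 * cdot u (band A k *m u)).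
  by apply: eq_bigr => k _; rewrite mul1r.
rewrite (sum_band_weighted A (fun _ => 1)) cdot_mulmx.
by apply: eq_bigr => i _; apply: eq_bigr => j _; rewrite mul1r.
Qed.

Definition windowed M u s : 'cV[C]_N := \col_i ((window M s i)%:R * u i 0).

Lemma sum_windowed_form M B u :
  \sum_(s < N + M) cdot (windowed M u s) (B *m windowed M u s) =
  \sum_(i < N) \sum_(j < N) (autocorr M `|i - j|)%:R * ((u i 0)^* * (B i j * u j 0)).
Proof.
have fits (k : 'I_N) : (k + M <= N + M)%N by rewrite leq_add2r ltnW.
under eq_bigr => s _ do rewrite cdot_mulmx.
rewrite exchange_big; apply: eq_bigr => i _.
rewrite exchange_big; apply: eq_bigr => j _.
rewrite -(sum_window_mul_dist (fits i) (fits j)) big_mkord natr_sum mulr_suml.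
by apply: eq_bigr => s _; rewrite !mxE natrM rmorphM /= rmorph_nat; ring.
Qed.

Lemma sum_windowed_band M A u :
  \sum_(s < N + M) cdot (windowed M u s) (A *m windowed M u s) =
  \sum_(k < N) (autocorr M k)%:R * cdot u (band A k *m u).
Proof. by rewrite sum_windowed_form (sum_band_weighted A (fun k => (autocorr M k)%:R)). Qed.

Lemma sum_windowed_norm M u :
  \sum_(s < N + M) cdot (windowed M u s) (windowed M u s) = (autocorr M 0)%:R * cdot u u.
Proof.
rewrite /cdot exchange_big mulr_sumr; apply: eq_bigr => i _.
have fits : (i + M <= N + M)%N by rewrite leq_add2r ltnW.
have := sum_window_mul_dist fits fits; rewrite distnn => <-.
rewrite big_mkord natr_sum mulr_suml; apply: eq_bigr => s _.
by rewrite !mxE natrM rmorphM /= rmorph_nat; ring.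
Qed.

Lemma supported_inZ a u n M : supported_in u n M -> supported_in (a *: u) n M.
Proof. by move=> supp_u j out_j; rewrite mxE supp_u ?mulr0. Qed.

Lemma windowed_supported M u (s : 'I_(N + M)) : (M <= N)%N ->
  supported_in (windowed M u s) (minn (s + 1 - M) (N - M)) M.
Proof.
move=> le_MN j out_j; rewrite mxE.
suff -> : window M s j = 0%N by rewrite mul0r.
apply/eqP; apply: contraNT out_j => /window_neq0 in_window.
have := ltn_ord s; have := ltn_ord j; lia.
Qed.

End QuadraticForms.

Lemma exists_ratio_le (R : realFieldType) (I : finType) (a b : I -> R) :
  (forall i, 0 <= b i) -> (forall i, b i = 0 -> a i = 0) -> 0 < \sum_i b i ->
  exists2 i, 0 < b i & a i / b i <= (\sum_i a i) / \sum_i b i.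
Proof.
move=> b_ge0 b0_a0 sum_b_gt0.
have [i0 bi0_gt0] : exists i, 0 < b i.
  apply/existsP; apply: contraTT sum_b_gt0 => /existsPn b_le0.
  by rewrite -leNgt; apply: sumr_le0 => i _; rewrite leNgt b_le0.
case: (@arg_minP _ _ _ i0 [pred i | 0 < b i] (fun i => a i / b i) bi0_gt0).
move=> i bi_gt0 min_i.
exists i => //; rewrite ler_pdivlMr // mulr_sumr; apply: ler_sum => j _.
have := b_ge0 j; rewrite le_eqVlt => /orP[/eqP bj0|bj_gt0].
  by rewrite -bj0 (b0_a0 j (esym bj0)) mulr0.
by rewrite -ler_pdivlMr //; apply: min_i.
Qed.

Local Open Scope complex_scope.

Section NormalizedWindows.
Variable R : realType.

Lemma Re_cdot_ge0 N (u : 'cV[R[i]]_N) : 0 <= complex.Re (cdot u u).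
Proof. by rewrite -lecR RRe_real ?ger0_real ?cdot_ge0. Qed.

Lemma Re_natrM n (z : R[i]) : complex.Re (n%:R * z) = n%:R * complex.Re z.
Proof. by rewrite mulr_natl raddfMn /= mulr_natl. Qed.

Lemma normC_real (x : R) : `|x%:C| = `|x|%:C.
Proof. by rewrite normc_def /= expr0n /= addr0 sqrtr_sqr. Qed.

Definition normalize N (u : 'cV[R[i]]_N) : 'cV[R[i]]_N :=
  ((Num.sqrt (complex.Re (cdot u u)))^-1)%:C *: u.

Lemma cdot_normalize N (B : 'M[R[i]]_N) u :
  cdot (normalize u) (B *m normalize u) =
  ((Num.sqrt (complex.Re (cdot u u)))^-1 ^+ 2)%:C * cdot u (B *m u).
Proof.
rewrite /normalize -scalemxAr cdotZl cdotZr conj_Creal; last by apply/complex_realP; eexists.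
by rewrite mulrA -rmorphM expr2.
Qed.

Lemma normalize_unit N (u : 'cV[R[i]]_N) :
  0 < complex.Re (cdot u u) -> cdot (normalize u) (normalize u) = 1.
Proof.
move=> norm_gt0; rewrite -{2}(mul1mx (normalize u)) cdot_normalize mul1mx.
rewrite -[cdot u u]RRe_real ?ger0_real ?cdot_ge0 // -rmorphM.
by rewrite exprVn sqr_sqrtr ?ltW // mulVf ?lt0r_neq0.
Qed.

Lemma normalize_rayleigh N (B : 'M[R[i]]_N) u : is_hermitian B ->
  0 < complex.Re (cdot u u) ->
  cdot (normalize u) (B *m normalize u) =
  (complex.Re (cdot u (B *m u)) / complex.Re (cdot u u))%:C.
Proof.
move=> hermB norm_gt0; rewrite cdot_normalize.
rewrite -[cdot u (B *m u)]RRe_real ?hermitian_form_real // -rmorphM.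
by rewrite exprVn sqr_sqrtr ?ltW // mulrC.
Qed.

Lemma exists_windowed_rayleigh_le N M (A : 'M[R[i]]_N) (psi : 'cV[R[i]]_N) :
  is_hermitian A -> cdot psi psi = 1 -> (0 < M)%N ->
  exists2 s : 'I_(N + M),
    0 < complex.Re (cdot (windowed M psi s) (windowed M psi s)) &
    complex.Re (cdot (windowed M psi s) (A *m windowed M psi s)) /
      complex.Re (cdot (windowed M psi s) (windowed M psi s)) <=
    (\sum_(k < N) (autocorr M k)%:R * complex.Re (cdot psi (band A k *m psi))) /
      (autocorr M 0)%:R.
Proof.
move=> hermA psi_unit M_gt0.
pose energy (s : 'I_(N + M)) := complex.Re (cdot (windowed M psi s) (A *m windowed M psi s)).
pose mass (s : 'I_(N + M)) := complex.Re (cdot (windowed M psi s) (windowed M psi s)).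
have sum_energy : \sum_s energy s =
    \sum_(k < N) (autocorr M k)%:R * complex.Re (cdot psi (band A k *m psi)).
  rewrite /energy -raddf_sum sum_windowed_band raddf_sum.
  by apply: eq_bigr => k _; rewrite /= Re_natrM.
have sum_mass : \sum_s mass s = (autocorr M 0)%:R.
  by rewrite /mass -raddf_sum /= sum_windowed_norm psi_unit Re_natrM mulr1.
have mass0_energy0 s : mass s = 0 -> energy s = 0.
  rewrite /energy => mass0; have /cdot_eq0 -> : cdot (windowed M psi s) (windowed M psi s) = 0.
    by rewrite -[LHS]RRe_real ?ger0_real ?cdot_ge0 // -/(mass s) mass0.
  by rewrite mulmx0 /cdot big1 // => i _; rewrite mxE mulr0.
rewrite -sum_energy -sum_mass; apply: exists_ratio_le => //.
  by move=> s; apply: Re_cdot_ge0.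
by rewrite sum_mass autocorr0_gt0.
Qed.

Lemma bound_real_complex N M (c : R) (d : nat -> R[i]) (r : nat -> R) :
  (forall k, d k = (r k)%:C) ->
  \sum_(k < N) d k + c%:C / M%:R ^+ 2 * \sum_(1 <= k < M) k%:R ^+ 2 * `|d k|
  + c%:C * \sum_(M <= k < N) `|d k| =
  (\sum_(k < N) r k + c / M%:R ^+ 2 * \sum_(1 <= k < M) k%:R ^+ 2 * `|r k|
  + c * \sum_(M <= k < N) `|r k|)%:C.
Proof.
move=> dE; rewrite !rmorphD !rmorphM /= fmorphV /= rmorphXn /= !rmorph_nat !rmorph_sum /=.
congr (_ + _ * _ + _ * _); apply: eq_bigr => k _; rewrite ?dE ?normC_real //.
by rewrite rmorphM /= rmorphXn /= rmorph_nat.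
Qed.

End NormalizedWindows.

Theorem theoremA1 (R : realType) :
  exists c : R, 0 < c /\
  forall (N : nat) (A : 'M[R[i]]_N) (psi : 'cV[R[i]]_N) (M : nat),
    is_hermitian A ->
    cdot psi psi = 1 ->
    (0 < M)%N -> (M <= N)%N ->
    let d := fun k : nat => cdot psi (band A k *m psi) in
    let lambda := cdot psi (A *m psi) in
    exists (n : nat) (phi : 'cV[R[i]]_N),
      (n <= N - M)%N /\
      cdot phi phi = 1 /\
      supported_in phi n M /\
      cdot phi (A *m phi) <=
        lambda
        + (c%:C / (M%:R ^+ 2)) * \sum_(1 <= k < M) (k%:R ^+ 2) * `|d k|
        + c%:C * \sum_(M <= k < N) `|d k|.
Proof.
exists 36; split=> [|N A psi M hermA psi_unit M_gt0 le_MN d lambda]; first by rewrite ltr0n.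
have [s norm_gt0 le_ratio] := exists_windowed_rayleigh_le hermA psi_unit M_gt0.
exists (minn (s + 1 - M) (N - M)), (normalize (windowed M psi s)).
split; first exact: geq_minr.
split; first exact: normalize_unit.
split; first exact/supported_inZ/windowed_supported.
have lambdaE : lambda = \sum_(k < N) d k by rewrite /d sum_band.
have dE k : d k = (complex.Re (d k))%:C.
  by rewrite RRe_real //; apply/hermitian_form_real/band_hermitian.
rewrite normalize_rayleigh // lambdaE (bound_real_complex _ _ _ dE) lecR.
exact: le_trans le_ratio (autocorr_weighted_le _ M_gt0 le_MN).
Qed.
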